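(* Let $M$ be a Hausdorff space satisfying the first axiom of countability and the Lindelöf condition, and let $\mathcal{I}$ be a $\sigma$-ideal in the Borel $\sigma$-algebra $\mathcal{B}(M)$ containing all singletons $\{x\}$, $x\in M$. Then the quotient $\sigma$-algebra $\mathcal{B}(M)/\mathcal{I}$ has no points.
   Context: A $\sigma$-ideal $\mathcal{I}$ of a $\sigma$-algebra $\mathcal{B}$ is a nonempty subset closed under $A\mapsto A\wedge B$ ($B\in\mathcal{B}$) and under countable joins. The quotient $\mathcal{B}/\mathcal{I}$ is the set of classes of the equivalence $a\sim b\iff\exists p\in\mathcal{I}: a\vee p=b\vee p$, with the induced Boolean $\sigma$-algebra operations $[a]\vee[b]=[a\vee b]$, $[a]\wedge[b]=[a\wedge b]$, $[a]^\perp=[a^\perp]$, countable joins $\bigvee_n[a_n]=[\bigvee_n a_n]$. A point in a $\sigma$-complete lattice $\mathbb{L}$ is a nonempty subset $\mathfrak{p}$ with: (1) $0\notin\mathfrak{p}$; (2) $a,b\in\mathfrak{p}\Rightarrow a\wedge b\in\mathfrak{p}$; (3) $a\in\mathfrak{p}$, $a\le b\Rightarrow b\in\mathfrak{p}$; (4) for every countable family $(a_n)$ with $\bigvee_n a_n\in\mathfrak{p}$ there is $n$ with $a_n\in\mathfrak{p}$. *)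

From HB Require Import structures.
From mathcomp Require Import all_boot all_order all_algebra.
From mathcomp Require Import all_classical all_reals all_analysis.
Set Implicit Arguments. Unset Strict Implicit. Unset Printing Implicit Defensive.
Local Open Scope classical_set_scope.

Section Defs.
Variable M : topologicalType.

Definition first_countable_space : Prop :=
  forall x : M, exists B : set (set M),
    [/\ countable B, (forall U, B U -> open U /\ U x) &
        (forall N, nbhs x N -> exists2 U, B U & U `<=` N)].

Definition lindelof_space : Prop :=
  forall C : set (set M), (forall U, C U -> open U) ->
    \bigcup_(U in C) U = [set: M] ->
    exists2 D : set (set M), countable D /\ D `<=` C & \bigcup_(U in D) U = [set: M].

Definition borel_set : set (set M) := <<s open >>.

Definition sigma_ideal (I : set (set M)) : Prop :=
  [/\ I `<=` borel_set, I !=set0,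
      (forall A B, I A -> borel_set B -> I (A `&` B)) &
      (forall A : nat -> set M, (forall n, I (A n)) -> I (\bigcup_n A n))].

Definition qeq (I : set (set M)) (a b : set M) : Prop :=
  exists2 p, I p & a `|` p = b `|` p.

Definition qle (I : set (set M)) (a b : set M) : Prop := qeq I (a `&` b) a.

(* A subset of B(M)/I, represented by the (saturated) set [P] of Borel
   representatives of its classes, is a point of the sigma-complete lattice
   B(M)/I. *)
Definition quotient_point (I : set (set M)) (P : set (set M)) : Prop :=
  [/\ P `<=` borel_set,
      (forall a b, borel_set a -> borel_set b -> qeq I a b -> P a -> P b),
      P !=set0 & ~ P set0] /\
  [/\
      (forall a b, P a -> P b -> P (a `&` b)),
      (forall a b, P a -> borel_set b -> qle I a b -> P b) &
      (forall a : nat -> set M, (forall n, borel_set (a n)) ->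
          P (\bigcup_n a n) -> exists n, P (a n))].
End Defs.

From mathcomp Require Import all_boot all_order all_algebra.
From mathcomp Require Import all_classical all_reals all_analysis.
Set Implicit Arguments.
Unset Strict Implicit.
Local Open Scope classical_set_scope.

(* Every x has an open neighbourhood U with [~ P U]: otherwise cover M by {x}
   (which lies in I, hence not in P) and the complements of the closures of a
   countable neighbourhood base at x, which by the Hausdorff property meet
   only in x; sigma-primeness of P then puts some complement in P, and it is
   disjoint from the corresponding base set, which therefore is not in P.
   These neighbourhoods cover M, so by the Lindelof condition countably many
   of them already do; M itself lies in P, so sigma-primeness yields one of
   them in P, a contradiction. *)

Lemma countable_enum (T : choiceType) (D : set T) (x0 : T) :
  D x0 -> countable D -> exists2 e : nat -> T, (forall n, D (e n)) & D `<=` range e.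
Proof.
move=> Dx0 /countable_injP[f finj].
exists (fun n => xget x0 [set x | D x /\ f x = n]).
  by move=> n; case: xgetP => [y _ []|].
move=> x Dx; exists (f x) => //; case: xgetP => [y _ [Dy fy]|noy].
  exact: finj (mem_set Dy) (mem_set Dx) fy.
by case: (noy x).
Qed.

Lemma hausdorff_bigcap_closure_nbhs_base (M : topologicalType) :
  hausdorff_space M -> first_countable_space M -> forall x : M,
  exists2 e : nat -> set M, (forall n, open (e n) /\ e n x) &
    \bigcap_n closure (e n) = [set x].
Proof.
move=> hM fcM x; have [B [cB Bopen Bbase]] := fcM x.
have [U0 BU0 _] := Bbase setT filterT.
have [e eB Bsube] := countable_enum BU0 cB.
exists e => [n|]; first exact: Bopen.
apply/seteqP; split=> [y clxy|_ ->]; last first.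
  by move=> n _; apply: subset_closure; exact: (Bopen _ (eB n)).2.
apply/esym/hM; rewrite clusterE => A nA.
have [U BU UA] := Bbase A nA; have [n _ enU] := Bsube U BU.
by apply: (closureS UA); rewrite -enU; exact: clxy.
Qed.

Section borel_set.
Variable M : topologicalType.

Lemma borel_set0 : borel_set (@set0 M).
Proof. exact: sigma_algebra0. Qed.

Lemma borel_set_open (U : set M) : open U -> borel_set U.
Proof. exact: sub_sigma_algebra. Qed.

Lemma borel_setC (A : set M) : borel_set A -> borel_set (~` A).
Proof. by move=> bA; rewrite -setTD; exact: sigma_algebraCD. Qed.

Lemma borel_setT : borel_set (@setT M).
Proof. by rewrite -setC0; apply: borel_setC; exact: borel_set0. Qed.

End borel_set.

Section quotient_point.
Variables (M : topologicalType) (I P : set (set M)).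
Hypotheses (sigma_ideal_I : sigma_ideal I) (point_P : quotient_point I P).

Lemma quotient_point_subset (a b : set M) : P a -> a `<=` b -> borel_set b -> P b.
Proof.
have [_ [_ Ple _]] := point_P; have [_ [p Ip] _ _] := sigma_ideal_I.
by move=> Pa ab bb; apply: Ple Pa bb _; exists p; rewrite ?(setIidl ab).
Qed.

Lemma quotient_point_setT : P setT.
Proof.
have [[_ _ [a Pa] _] _] := point_P.
exact: quotient_point_subset Pa (@subsetT _ a) (@borel_setT M).
Qed.

Lemma quotient_point_ideal (a : set M) : I a -> ~ P a.
Proof.
have [[_ Psat _ P0] _] := point_P; have [Ib _ _ _] := sigma_ideal_I.
move=> Ia Pa; apply/P0/(Psat a) => //; first exact: Ib.
  exact: borel_set0.
by exists a; rewrite // set0U setUid.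
Qed.

Lemma quotient_point_disjoint (a b : set M) : P a -> P b -> a `&` b !=set0.
Proof.
have [[_ _ _ P0] [PI _ _]] := point_P.
by move=> Pa Pb; apply/set0P/eqP => ab0; apply: P0; rewrite -ab0; exact: PI.
Qed.

Lemma quotient_point_setU (a b : set M) :
  borel_set a -> borel_set b -> P (a `|` b) -> P a \/ P b.
Proof.
have [_ [_ _ Pcup]] := point_P; move=> ba bb.
have b2 n : borel_set (bigcup2 a b n) by case: n => [|[|n]] //=; exact: borel_set0.
rewrite -bigcup2E => /(Pcup _ b2)[[|[|n]] /= Pn]; [by left | by right | ].
by have [[_ _ _ P0] _] := point_P.
Qed.

Lemma quotient_point_countable_bigcup (D : set (set M)) :
  countable D -> D `<=` @borel_set M -> P (\bigcup_(U in D) U) -> exists2 U, D U & P U.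
Proof.
have [_ [_ _ Pcup]] := point_P.
have [->|/set0P[U0 DU0]] := eqVneq D set0.
  by rewrite bigcup_set0 => _ _; have [[_ _ _ P0] _] := point_P.
move=> cD Db; have [e eD Dsube] := countable_enum DU0 cD.
have -> : \bigcup_(U in D) U = \bigcup_n e n.
  apply/seteqP; split=> [x [U DU Ux]|x [n _ enx]]; last by exists (e n).
  by have [n _ enU] := Dsube U DU; exists n => //; rewrite enU.
by case/(Pcup e (fun n => Db _ (eD n))) => n Pen; exists (e n).
Qed.

Lemma quotient_point_notin_open_nbhs : hausdorff_space M ->
  first_countable_space M -> (forall x : M, I [set x]) ->
  forall x : M, exists U, [/\ open U, U x & ~ P U].
Proof.
move=> hM fcM Ix x; have [_ [_ _ Pcup]] := point_P.
have [e eopen clex] := hausdorff_bigcap_closure_nbhs_base hM fcM x.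
have bclC n : borel_set (~` closure (e n)).
  by apply: borel_set_open; rewrite openC; exact: closed_closure.
have : P ([set x] `|` \bigcup_n ~` closure (e n)).
  by rewrite -setC_bigcap clex setUCr; exact: quotient_point_setT.
have [Ib _ _ _] := sigma_ideal_I.
case/quotient_point_setU => [||/(quotient_point_ideal (Ix x))[]|].
- exact: Ib.
- exact: sigma_algebra_bigcup.
case/(Pcup _ bclC) => n Pn; exists (e n); have [oen enx] := eopen n.
split=> // Pen; have [y [eny]] := quotient_point_disjoint Pen Pn.
by apply; exact: subset_closure.
Qed.

End quotient_point.

Theorem proposition3p30 (M : topologicalType) :
  hausdorff_space M -> first_countable_space M -> lindelof_space M ->
  forall I : set (set M), sigma_ideal I -> (forall x : M, I [set x]) ->
  ~ exists P : set (set M), quotient_point I P.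
Proof.
move=> hM fcM lM I Iideal Ix [P Ppoint].
pose C := [set U : set M | open U /\ ~ P U].
have Ccover : \bigcup_(U in C) U = setT.
  apply/seteqP; split=> // x _.
  have [U [oU Ux nPU]] := quotient_point_notin_open_nbhs Iideal Ppoint hM fcM Ix x.
  by exists U.
have [D [cD DC] DT] := lM C (fun U CU => CU.1) Ccover.
have Dborel : D `<=` @borel_set M by move=> U /DC[oU _]; exact: borel_set_open.
have PD : P (\bigcup_(U in D) U) by rewrite DT; exact: quotient_point_setT Iideal Ppoint.
have [U DU PU] := quotient_point_countable_bigcup Ppoint cD Dborel PD.
exact: (DC _ DU).2 PU.
Qed.
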